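(* Let $\nu \geq 1$ and $\delta > 0$ be real numbers, let $s \geq 4$ be an even natural number, and let $A$ be a finite non-empty set of real numbers satisfying $E_s(A) = |A|^{2s - \nu}$ and $E_{s/2}(A) \leq |A|^{s - \nu + \delta}$. Then there exists $G \subseteq A^s$ such that \[ |G| > |A|^{s - \delta}/2 \quad \text{and} \quad |\Sigma(G)| \leq 4 |A|^{\nu}, \] where $\Sigma(G) = \{a_1 + \dots + a_s : (a_1, \dots, a_s) \in G\}$.
   Context: For a finite set $X$ of reals and $t \in \mathbb{N}$, $E_t(X) = |\{(x_1,\dots,x_{2t}) \in X^{2t} : x_1 + \dots + x_t = x_{t+1} + \dots + x_{2t}\}|$. *)

From mathcomp Require Import all_boot all_order all_algebra.
From mathcomp Require Import finmap.
From mathcomp Require Import all_classical all_reals all_analysis.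
Set Implicit Arguments. Unset Strict Implicit. Unset Printing Implicit Defensive.
Import Order.TTheory GRing.Theory Num.Theory.
Local Open Scope ring_scope.
Local Open Scope fset_scope.

(* Tuples in X^n are represented as finite functions 'I_n -> X, where the
   finite set X : {fset R} is viewed as a finType of its elements. *)

Definition energy (R : realType) (X : {fset R}) (t : nat) : nat :=
  #|[set x : {ffun 'I_(t + t) -> X} |
      \sum_(i < t) val (x (lshift t i)) == \sum_(i < t) val (x (rshift t i))]|.

Definition sumset (R : realType) (X : {fset R}) (s : nat)
  (G : {set {ffun 'I_s -> X}}) : {fset R} :=
  [fset (\sum_(i < s) val (g i)) | g : {ffun 'I_s -> X} in G].

From mathcomp Require Import all_boot all_order all_algebra.
From mathcomp Require Import finmap.
From mathcomp Require Import all_classical all_reals all_analysis.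
From mathcomp Require Import ring lra.
Set Implicit Arguments. Unset Strict Implicit. Unset Printing Implicit Defensive.
Import Order.TTheory GRing.Theory Num.Theory.
Local Open Scope ring_scope.

(* For y real, let c(y) be the number of s-tuples of A summing to y, so that
   E_s(A) is the sum of c(a_1 + ... + a_s) over all N^s tuples, N = |A|.
   Splitting an s-tuple into two halves u, v and weighting each
   representation y = sum u + sum v by c'(sum v) / c'(sum u), where c' counts
   (s/2)-tuples in the same way, AM-GM shows c(y) <= E_{s/2}(A).
   Let G be the set of tuples whose sum y has c(y) >= tau = N^(s-nu)/4.  The
   tuples outside G contribute at most tau N^s = E_s(A)/4 to E_s(A), hence
   |G| E_{s/2}(A) >= 3 E_s(A)/4, i.e. |G| >= 3/4 N^(s-delta).  The sets of
   tuples with a given sum y, for the distinct sums y of G, are disjoint and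
   have at least tau elements each, hence |Sigma(G)| <= N^s / tau = 4 N^nu. *)

Lemma two_le_add_divr (R : realFieldType) (a b : R) :
  0 < a -> 0 < b -> 2 <= a / b + b / a.
Proof.
move=> a_gt0 b_gt0; rewrite -subr_ge0.
have -> : a / b + b / a - 2 = (a - b) ^+ 2 / (a * b).
  by field; rewrite !gt_eqF.
by rewrite divr_ge0 ?sqr_ge0 // ltW ?mulr_gt0.
Qed.

Lemma card_set_pairs (T : finType) (P : rel T) :
  #|[set p : T * T | P p.1 p.2]| = (\sum_u \sum_v P u v)%N.
Proof. by rewrite -sum1dep_card big_mkcond -(pair_bigA _ (fun u v => P u v : nat)). Qed.

Section Fibers.
Variables (T : finType) (V : choiceType) (f : T -> V).

Definition fiber_card (y : V) : nat := #|[set u | f u == y]|.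

Lemma fiber_cardE (y : V) : fiber_card y = (\sum_u (f u == y))%N.
Proof. by rewrite /fiber_card -sum1dep_card big_mkcond; apply: eq_bigr => u _; case: eqP. Qed.

Lemma fiber_card_gt0 (u : T) : (0 < fiber_card (f u))%N.
Proof. by apply/card_gt0P; exists u; rewrite inE. Qed.

Lemma card_eq_pairs : #|[set p : T * T | f p.1 == f p.2]| = (\sum_u fiber_card (f u))%N.
Proof.
rewrite (card_set_pairs (fun u v => f u == f v)); apply: eq_bigr => u _; rewrite fiber_cardE.
by apply: eq_bigr => v _; rewrite eq_sym.
Qed.

Lemma sum_fiber_card_uniq_le (ys : seq V) : uniq ys -> (\sum_(y <- ys) fiber_card y <= #|T|)%N.
Proof.
move=> ys_uniq; under eq_bigr do rewrite fiber_cardE.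
rewrite exchange_big /= -sum1_card; apply: leq_sum => u _.
have -> : (\sum_(y <- ys) (f u == y) = \sum_(y <- ys | f u == y) 1)%N.
  by rewrite [RHS]big_mkcond.
rewrite sum1_count.
have -> : count (fun y => f u == y) ys = count_mem (f u) ys.
  by apply: eq_count => y; rewrite /= eq_sym.
by rewrite count_uniq_mem // leq_b1.
Qed.

Variable R : realFieldType.

Lemma sum_inv_fiber_card_le1 (y : V) :
  \sum_u (f u == y)%:R / (fiber_card (f u))%:R <= 1 :> R.
Proof.
have -> : \sum_u (f u == y)%:R / (fiber_card (f u))%:R =
          (fiber_card y)%:R / (fiber_card y)%:R :> R.
  rewrite {1}fiber_cardE natr_sum mulr_suml; apply: eq_bigr => u _.
  by case: eqP => [->|]; rewrite ?mul0r.
have [->|y_rep] := eqVneq (fiber_card y) 0%N; first by rewrite mul0r.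
by rewrite mulfV ?pnatr_eq0.
Qed.

Definition popular (tau : R) : {set T} := [set u | tau <= (fiber_card (f u))%:R].

Lemma sum_fiber_card_popular (tau : R) (M : nat) :
  0 <= tau -> (forall y, fiber_card y <= M)%N ->
  (\sum_u fiber_card (f u))%:R <= #|popular tau|%:R * M%:R + tau * #|T|%:R.
Proof.
move=> tau_ge0 fiber_le; rewrite natr_sum (bigID (mem (popular tau))) /=; apply: lerD.
  rewrite -sum1_card natr_sum mulr_suml; apply: ler_sum => u _.
  by rewrite mul1r ler_nat.
apply: (@le_trans _ _ (\sum_(u | u \notin popular tau) tau)).
  by apply: ler_sum => u; rewrite inE -ltNge => /ltW.
have -> : tau * #|T|%:R = \sum_(u : T) tau by rewrite sumr_const mulr_natr.
by rewrite big_mkcond; apply: ler_sum => u _; case: ifP.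
Qed.

Lemma card_image_popular (tau : R) :
  #|` [fset f u | u in popular tau]%fset|%:R * tau <= #|T|%:R.
Proof.
set S := [fset f u | u in popular tau]%fset.
apply: (@le_trans _ _ (\sum_(y <- S) (fiber_card y)%:R)).
  rewrite card_fset_sum1 natr_sum mulr_suml big_seq [X in _ <= X]big_seq.
  by apply: ler_sum => _ /imfsetP[u /[!inE] u_pop ->]; rewrite mul1r.
by rewrite -natr_sum ler_nat sum_fiber_card_uniq_le ?fset_uniq.
Qed.

End Fibers.

Section AdditiveFibers.
Variables (T : finType) (V : zmodType) (f : T -> V).

Lemma card_sum_pairs_le_sum_fiber_card (x : V) :
  (#|[set p : T * T | (f p.1 + f p.2 == x)%R]| <= \sum_u fiber_card f (f u))%N.
Proof.
pose c u : rat := (fiber_card f (f u))%:R.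
have c_gt0 u : 0 < c u by rewrite ltr0n fiber_card_gt0.
pose rep u v : rat := (f u + f v == x)%:R.
pose W := \sum_u \sum_v rep u v * (c v / c u).
have W_le : W <= \sum_v c v.
  rewrite /W exchange_big /=; apply: ler_sum => v _.
  have -> : \sum_u rep u v * (c v / c u) = c v * \sum_u (f u == x - f v)%:R / c u.
    rewrite mulr_sumr; apply: eq_bigr => u _.
    by rewrite /rep -subr_eq opprK mulrCA.
  by rewrite -[X in _ <= X]mulr1; apply: ler_wpM2l; [exact: ltW | exact: sum_inv_fiber_card_le1].
have W_sym : \sum_u \sum_v rep u v * (c u / c v) = W.
  rewrite exchange_big; apply: eq_bigr => v _; apply: eq_bigr => u _.
  by rewrite /rep addrC.
rewrite -(ler_nat rat) (card_set_pairs (fun u v => f u + f v == x)) natr_sum.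
apply: (le_trans _ (le_trans W_le _)); last by rewrite natr_sum.
rewrite -(ler_pM2l (ltr0Sn rat 1)) !mulr_natl !mulr2n -{1}W_sym /W -!big_split.
apply: ler_sum => u _; rewrite natr_sum -!big_split; apply: ler_sum => v _.
rewrite /= -mulrDr -mulr2n -(mulr_natr _ 2); apply: ler_wpM2l; first exact: ler0n.
exact: two_le_add_divr.
Qed.

End AdditiveFibers.

Section FfunCat.
Variables (X : Type) (m n : nat).

Definition ffun_cat (p : {ffun 'I_m -> X} * {ffun 'I_n -> X}) : {ffun 'I_(m + n) -> X} :=
  [ffun k => match fintype.split k with inl i => p.1 i | inr j => p.2 j end].

Definition ffun_split (x : {ffun 'I_(m + n) -> X}) : {ffun 'I_m -> X} * {ffun 'I_n -> X} :=
  ([ffun i => x (lshift n i)], [ffun j => x (rshift m j)]).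

Lemma ffun_catK : cancel ffun_cat ffun_split.
Proof.
case=> u v; congr (_, _); apply/ffunP => i; rewrite !ffunE.
  by rewrite (unsplitK (inl i)).
by rewrite (unsplitK (inr i)).
Qed.

Lemma ffun_splitK : cancel ffun_split ffun_cat.
Proof.
move=> x; apply/ffunP => k; rewrite ffunE -{2}(fintype.splitK k).
by case: (fintype.split k) => i /=; rewrite ffunE.
Qed.

End FfunCat.

Lemma card_set_ffun_split (X : finType) (m n : nat)
    (P : pred ({ffun 'I_m -> X} * {ffun 'I_n -> X})) :
  #|[set x | P (ffun_split x)]| = #|[set p | P p]|.
Proof.
have -> : [set x | P (ffun_split x)] = @ffun_split X m n @^-1: [set p | P p].
  by apply/setP => x; rewrite !inE.
rewrite on_card_preimset //.
by exists (@ffun_cat _ _ _) => p _; [exact: ffun_splitK | exact: ffun_catK].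
Qed.

Section TupleSums.
Variables (R : realType) (A : {fset R}).

Definition tsum n (u : {ffun 'I_n -> A}) : R := \sum_(i < n) val (u i).

Lemma tsum_cat m n (p : {ffun 'I_m -> A} * {ffun 'I_n -> A}) :
  tsum (ffun_cat p) = tsum p.1 + tsum p.2.
Proof.
rewrite /tsum big_split_ord /=; congr (_ + _); apply: eq_bigr => i _; rewrite ffunE.
  by rewrite (unsplitK (inl i)).
by rewrite (unsplitK (inr i)).
Qed.

Lemma card_tuples n : #|{ffun 'I_n -> A}| = (#|` A| ^ n)%N.
Proof. by rewrite card_ffun card_ord -cardfE. Qed.

Lemma energy_sum_fiber_card n :
  energy A n = (\sum_(u : {ffun 'I_n -> A}) fiber_card (@tsum n) (tsum u))%N.
Proof.
rewrite -card_eq_pairs -card_set_ffun_split; apply: eq_card => x.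
by rewrite !inE; congr (_ == _); apply: eq_bigr => i _; rewrite ffunE.
Qed.

Lemma fiber_card_tsum_le_energy n (x : R) : (fiber_card (@tsum (n + n)) x <= energy A n)%N.
Proof.
have -> : fiber_card (@tsum (n + n)) x =
    #|[set p : {ffun 'I_n -> A} * {ffun 'I_n -> A} | tsum p.1 + tsum p.2 == x]|.
  by rewrite -card_set_ffun_split; apply: eq_card => y; rewrite !inE -tsum_cat ffun_splitK.
by rewrite energy_sum_fiber_card card_sum_pairs_le_sum_fiber_card.
Qed.

Lemma fiber_card_tsum_le_energy_half s (x : R) :
  ~~ odd s -> (fiber_card (@tsum s) x <= energy A s./2)%N.
Proof.
move=> s_even; have [t ->] : exists t, s = (t + t)%N by exists s./2; rewrite addnn even_halfK.
have -> : (t + t)./2 = t by rewrite addnn doubleK.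
exact: fiber_card_tsum_le_energy.
Qed.

End TupleSums.

Theorem lemma8p1 (R : realType) (nu delta : R) (s : nat) (A : {fset R}) :
  1 <= nu -> 0 < delta -> (4 <= s)%N -> ~~ odd s -> A != fset0 ->
  (energy A s)%:R = (#|` A|%:R) `^ (2 * s%:R - nu) ->
  (energy A s./2)%:R <= (#|` A|%:R) `^ (s%:R - nu + delta) ->
  exists G : {set {ffun 'I_s -> A}},
    (#|` A|%:R) `^ (s%:R - delta) / 2 < #|G|%:R /\
    (#|` sumset G|%:R : R) <= 4 * (#|` A|%:R) `^ nu.
Proof.
move=> _ _ _ s_even A_neq0 Es Et.
set N : R := #|` A|%:R in Es Et *.
have N_gt0 : 0 < N by rewrite ltr0n cardfs_gt0.
have powND a b : N `^ (a + b) = N `^ a * N `^ b by rewrite powRD // (gt_eqF N_gt0) implybT.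
have card_T : #|{ffun 'I_s -> A}|%:R = N `^ s%:R by rewrite card_tuples natrX powR_mulrn ?ltW.
pose tau := N `^ (s%:R - nu) / 4.
have tau_gt0 : 0 < tau by rewrite divr_gt0 ?powR_gt0.
pose G := popular (@tsum R A s) tau.
exists G; split.
- have := sum_fiber_card_popular (ltW tau_gt0)
    (fun y => fiber_card_tsum_le_energy_half A y s_even).
  rewrite -energy_sum_fiber_card Es card_T.
  set P := N `^ (s%:R - delta); set Q := N `^ (s%:R - nu + delta).
  have -> : N `^ (2 * s%:R - nu) = P * Q by rewrite -powND; congr (_ `^ _); ring.
  have -> : tau * N `^ s%:R = P * Q / 4 by rewrite /tau mulrAC -!powND; congr (_ `^ _ / 4); ring.
  have P_gt0 : 0 < P by rewrite powR_gt0.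
  have Q_gt0 : 0 < Q by rewrite powR_gt0.
  move=> mass; have GQ : P * (3 / 4) * Q <= #|G|%:R * Q.
    by apply: le_trans (ler_wpM2l (ler0n _ _) Et); lra.
  by rewrite ler_pM2r // in GQ; apply: lt_le_trans GQ; lra.
- have := card_image_popular (@tsum R A s) tau.
  rewrite card_T -[s%:R](subrK nu) powND -/(sumset G) => card_tau.
  by rewrite -(ler_pM2r tau_gt0); apply: le_trans card_tau _; rewrite /tau; lra.
Qed.
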